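(* Let $(G,D,\star)$ be a probabilistic metric space such that $\star$ is sup-continuous, let $A$ be a nonempty subset of $G$, and let $f:A\to\Delta^+$ be a probabilistic $1$-Lipschitz map (i.e. $D(x,y)\star f(y)\le f(x)$ for all $x,y\in A$). Then there exists a probabilistic $1$-Lipschitz map $\tilde f:G\to\Delta^+$ with $\tilde f|_A=f$.
   Context: A distribution function is a nondecreasing, left-continuous function $F:[-\infty,+\infty]\to[0,1]$ with $F(-\infty)=0$, $F(+\infty)=1$; $\Delta^+$ is the set of distribution functions with $F(0)=0$, ordered pointwise; $(\Delta^+,\le)$ is a complete lattice with maximum $\mathcal H_0$ ($\mathcal H_0(t)=0$ for $t\le0$, $1$ for $t>0$). A triangle function is a binary operation $\star$ on $\Delta^+$ that is commutative, associative, nondecreasing in each argument, with $F\star\mathcal H_0=F$. It is sup-continuous if $\sup_{i\in I}(F_i\star L)=(\sup_{i\in I}F_i)\star L$ for every nonempty family $(F_i)_{i\in I}\subset\Delta^+$ and every $L\in\Delta^+$. A probabilistic metric space $(G,D,\star)$ consists of a set $G$, a triangle function $\star$ and $D:G\times G\to\Delta^+$ with (i) $D(p,q)=\mathcal H_0$ iff $p=q$; (ii) $D(p,q)=D(q,p)$; (iii) $D(p,q)\star D(q,r)\le D(p,r)$. A map $f:G\to\Delta^+$ is probabilistic $1$-Lipschitz if $D(x,y)\star f(y)\le f(x)$ for all $x,y\in G$. *)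

From Stdlib Require Import Reals Lra.
Open Scope R_scope.

(* A distribution function F : [-oo,+oo] -> [0,1] is represented by its
   restriction to R; the values F(-oo)=0 and F(+oo)=1 are fixed and implicit. *)
Record Dplus : Type := mkDplus {
  dfun :> R -> R;
  dfun_range : forall t, 0 <= dfun t <= 1;
  dfun_mono : forall s t, s <= t -> dfun s <= dfun t;
  dfun_lcont : forall t eps, 0 < eps ->
      exists delta, 0 < delta /\
        forall s, t - delta < s < t -> Rabs (dfun s - dfun t) < eps;
  dfun_zero : dfun 0 = 0
}.

(* pointwise order (values at -oo, +oo coincide for all elements) *)
Definition dle (F G : Dplus) : Prop := forall t, F t <= G t.

Definition H0fun (t : R) : R := if Rle_dec t 0 then 0 else 1.

Lemma H0_range : forall t, 0 <= H0fun t <= 1.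
Proof. intro t; unfold H0fun; destruct (Rle_dec t 0); lra. Qed.

Lemma H0_mono : forall s t, s <= t -> H0fun s <= H0fun t.
Proof.
  intros s t H; unfold H0fun; destruct (Rle_dec s 0); destruct (Rle_dec t 0); lra.
Qed.

Lemma H0_lcont : forall t eps, 0 < eps ->
  exists delta, 0 < delta /\
    forall s, t - delta < s < t -> Rabs (H0fun s - H0fun t) < eps.
Proof.
  intros t eps He. destruct (Rle_dec t 0) as [Ht|Ht].
  - exists 1; split; [lra|]. intros s Hs; unfold H0fun.
    destruct (Rle_dec s 0); destruct (Rle_dec t 0); try lra.
    replace (0 - 0) with 0 by lra. rewrite Rabs_R0; lra.
  - exists t; split; [lra|]. intros s Hs; unfold H0fun.
    destruct (Rle_dec s 0); destruct (Rle_dec t 0); try lra.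
    replace (1 - 1) with 0 by lra. rewrite Rabs_R0; lra.
Qed.

Lemma H0_zero : H0fun 0 = 0.
Proof. unfold H0fun; destruct (Rle_dec 0 0); lra. Qed.

Definition H0 : Dplus := mkDplus H0fun H0_range H0_mono H0_lcont H0_zero.

Definition is_sup {I : Type} (F : I -> Dplus) (S : Dplus) : Prop :=
  (forall i, dle (F i) S) /\
  (forall U : Dplus, (forall i, dle (F i) U) -> dle S U).

Definition triangle_function (star : Dplus -> Dplus -> Dplus) : Prop :=
  (forall F G, star F G = star G F) /\
  (forall F G K, star F (star G K) = star (star F G) K) /\
  (forall F F' G, dle F F' -> dle (star F G) (star F' G)) /\
  (forall F G G', dle G G' -> dle (star F G) (star F G')) /\
  (forall F, star F H0 = F).

Definition sup_continuous (star : Dplus -> Dplus -> Dplus) : Prop :=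
  forall (I : Type) (F : I -> Dplus) (S L : Dplus),
    inhabited I -> is_sup F S -> is_sup (fun i => star (F i) L) (star S L).

Definition PM_space {G : Type} (D : G -> G -> Dplus)
  (star : Dplus -> Dplus -> Dplus) : Prop :=
  triangle_function star /\
  (forall p q, D p q = H0 <-> p = q) /\
  (forall p q, D p q = D q p) /\
  (forall p q r, dle (star (D p q) (D q r)) (D p r)).

Definition prob_lipschitz_on {G : Type} (D : G -> G -> Dplus)
  (star : Dplus -> Dplus -> Dplus) (P : G -> Prop) (f : G -> Dplus) : Prop :=
  forall x y, P x -> P y -> dle (star (D x y) (f y)) (f x).

(* The extension is the probabilistic McShane formula
   ft x = sup_{a in A} D(x,a) * f(a).  Sup-continuity lets D(x,y) * ft y be
   computed termwise, and D(x,y) * D(y,a) <= D(x,a) gives the Lipschitz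
   bound; on A the term a = x equals H0 * f x = f x, while the Lipschitz
   property of f bounds every other term by f x.  Suprema of nonempty
   families exist in Delta^+ because the pointwise supremum of
   left-continuous nondecreasing functions is again left-continuous. *)

From Stdlib Require Import Reals Lra Classical ProofIrrelevance FunctionalExtensionality.
Open Scope R_scope.

Lemma dle_refl (F : Dplus) : dle F F.
Proof. intro t; lra. Qed.

Lemma dle_trans (F G K : Dplus) : dle F G -> dle G K -> dle F K.
Proof. intros HFG HGK t; specialize (HFG t); specialize (HGK t); lra. Qed.

Lemma dle_antisym (F G : Dplus) : dle F G -> dle G F -> F = G.
Proof.
  destruct F as [f ? ? ? ?], G as [g ? ? ? ?]; unfold dle; simpl; intros Hfg Hgf.
  assert (f = g) as <-.
  { apply functional_extensionality; intro t; specialize (Hfg t); specialize (Hgf t); lra. }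
  f_equal; apply proof_irrelevance.
Qed.

Section PointwiseSup.
Variables (I : Type) (F : I -> Dplus).
Hypothesis I_inhabited : inhabited I.

Definition values_at (t : R) : R -> Prop := fun r => exists i, r = F i t.

Lemma values_at_bound t : bound (values_at t).
Proof. exists 1; intros r [i ->]; apply dfun_range. Qed.

Lemma values_at_nonempty t : exists r, values_at t r.
Proof. destruct I_inhabited as [i]; exists (F i t), i; reflexivity. Qed.

Definition sup_fun (t : R) : R :=
  proj1_sig (completeness _ (values_at_bound t) (values_at_nonempty t)).

Lemma sup_fun_is_lub t : is_lub (values_at t) (sup_fun t).
Proof. unfold sup_fun; destruct completeness as [m Hm]; exact Hm. Qed.

Lemma sup_fun_ge i t : F i t <= sup_fun t.
Proof. apply (sup_fun_is_lub t); exists i; reflexivity. Qed.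

Lemma sup_fun_le t u : (forall i, F i t <= u) -> sup_fun t <= u.
Proof.
  intro Hu; apply (sup_fun_is_lub t); intros r [i ->]; apply Hu.
Qed.

Lemma sup_fun_range t : 0 <= sup_fun t <= 1.
Proof.
  destruct I_inhabited as [i]; split.
  - pose proof (dfun_range (F i) t); pose proof (sup_fun_ge i t); lra.
  - apply sup_fun_le; intro j; apply dfun_range.
Qed.

Lemma sup_fun_mono s t : s <= t -> sup_fun s <= sup_fun t.
Proof.
  intro Hst; apply sup_fun_le; intro i.
  pose proof (dfun_mono (F i) s t Hst); pose proof (sup_fun_ge i t); lra.
Qed.

Lemma sup_fun_zero : sup_fun 0 = 0.
Proof.
  pose proof (sup_fun_range 0).
  enough (sup_fun 0 <= 0) by lra.
  apply sup_fun_le; intro i; rewrite dfun_zero; lra.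
Qed.

(* Pick a member within eps/2 of the supremum at t and use its left continuity;
   monotonicity of sup_fun squeezes sup_fun s between F i s and sup_fun t. *)
Lemma sup_fun_lcont t eps : 0 < eps ->
  exists delta, 0 < delta /\
    forall s, t - delta < s < t -> Rabs (sup_fun s - sup_fun t) < eps.
Proof.
  intro Heps.
  assert (Hnear : exists i, sup_fun t - eps / 2 < F i t).
  { apply NNPP; intro Hnone.
    enough (sup_fun t <= sup_fun t - eps / 2) by lra.
    apply sup_fun_le; intro i; apply Rnot_lt_le; intro Hi; apply Hnone; exists i; exact Hi. }
  destruct Hnear as [i Hi].
  destruct (dfun_lcont (F i) t (eps / 2)) as [delta [Hdelta Hcont]]; [lra|].
  exists delta; split; [exact Hdelta|]; intros s Hs.
  specialize (Hcont s Hs); apply Rabs_def2 in Hcont.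
  pose proof (sup_fun_mono s t ltac:(lra)); pose proof (sup_fun_ge i s).
  apply Rabs_def1; lra.
Qed.

Definition Dplus_sup : Dplus :=
  mkDplus sup_fun sup_fun_range sup_fun_mono sup_fun_lcont sup_fun_zero.

Lemma is_sup_Dplus_sup : is_sup F Dplus_sup.
Proof.
  split.
  - intros i t; apply sup_fun_ge.
  - intros U HU t; apply sup_fun_le; intro i; apply HU.
Qed.

End PointwiseSup.

Arguments Dplus_sup {I} F I_inhabited.
Arguments is_sup_Dplus_sup {I} F I_inhabited.

Section McShaneExtension.
Variables (G : Type) (D : G -> G -> Dplus) (star : Dplus -> Dplus -> Dplus).
Hypothesis star_comm : forall F K, star F K = star K F.
Hypothesis star_assoc : forall F K L, star F (star K L) = star (star F K) L.
Hypothesis star_monol : forall F F' K, dle F F' -> dle (star F K) (star F' K).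
Hypothesis star_H0 : forall F, star F H0 = F.
Hypothesis star_sup_continuous : sup_continuous star.
Hypothesis D_triangle : forall p q r, dle (star (D p q) (D q r)) (D p r).
Hypothesis D_refl : forall p, D p p = H0.

Variables (A : G -> Prop) (f : {x : G | A x} -> Dplus).
Hypothesis A_inhabited : inhabited {x : G | A x}.

Definition mcshane_terms (x : G) (a : {x : G | A x}) : Dplus :=
  star (D x (proj1_sig a)) (f a).

Definition mcshane_ext (x : G) : Dplus :=
  Dplus_sup (mcshane_terms x) A_inhabited.

Lemma mcshane_terms_le_ext x a : dle (mcshane_terms x a) (mcshane_ext x).
Proof. apply (is_sup_Dplus_sup _ A_inhabited). Qed.

Lemma mcshane_ext_lipschitz : prob_lipschitz_on D star (fun _ => True) mcshane_ext.
Proof.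
  intros x y _ _; rewrite star_comm.
  destruct (star_sup_continuous _ _ _ (D x y) A_inhabited
              (is_sup_Dplus_sup (mcshane_terms y) A_inhabited)) as [_ Hleast].
  apply Hleast; intro a.
  apply dle_trans with (mcshane_terms x a); [|apply mcshane_terms_le_ext].
  unfold mcshane_terms; rewrite star_comm, star_assoc.
  apply star_monol, D_triangle.
Qed.

Lemma mcshane_ext_extends :
  (forall x y, dle (star (D (proj1_sig x) (proj1_sig y)) (f y)) (f x)) ->
  forall a, mcshane_ext (proj1_sig a) = f a.
Proof.
  intros f_lipschitz a; apply dle_antisym.
  - apply (is_sup_Dplus_sup _ A_inhabited); intro b; apply f_lipschitz.
  - apply dle_trans with (mcshane_terms (proj1_sig a) a); [|apply mcshane_terms_le_ext].
    unfold mcshane_terms; rewrite D_refl, star_comm, star_H0; apply dle_refl.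
Qed.

End McShaneExtension.

Arguments mcshane_ext {G} D star {A} f A_inhabited x.

Theorem mainTheorem4 (G : Type) (D : G -> G -> Dplus)
  (star : Dplus -> Dplus -> Dplus)
  (HPM : PM_space D star) (Hsup : sup_continuous star)
  (A : G -> Prop) (HA : exists a, A a)
  (f : {x : G | A x} -> Dplus)
  (Hf : forall (x y : {x : G | A x}),
          dle (star (D (proj1_sig x) (proj1_sig y)) (f y)) (f x)) :
  exists ft : G -> Dplus,
    prob_lipschitz_on D star (fun _ => True) ft /\
    (forall x : {x : G | A x}, ft (proj1_sig x) = f x).
Proof.
  destruct HPM as [[Hcomm [Hassoc [Hmonol [_ HH0]]]] [HD0 [_ Htri]]].
  assert (HDrefl : forall p, D p p = H0) by (intro p; apply HD0; reflexivity).
  destruct HA as [a Ha].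
  pose proof (inhabits (exist A a Ha)) as HAinh.
  exists (mcshane_ext D star f HAinh); split.
  - apply mcshane_ext_lipschitz; assumption.
  - apply mcshane_ext_extends; assumption.
Qed.
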